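(* Let $A$ be a finite multiset of $n$ points in $\mathbb{R}^d$ with mean $\mu$, $\varepsilon>0$, $\gamma>0$, and let $i$ be a non-negative integer. Let $P\subset\mathbb{R}^d$ be a finite multiset of points (means) such that at least a $\left(1-\left(\frac{3}{10}\right)^{i+1}\right)$ fraction of them are $\gamma$-good. Then $\textsc{MinSumSelect}(P,i)$ returns a point that is $5^{i+1}\gamma$-good.
   Context: $\mu=\frac1n\sum_{p\in A}p$, $\mathrm{Opt}=\sum_{p\in A}\|p-\mu\|^2$. A point $x$ is $\gamma$-good if $\|x-\mu\|\le\gamma\sqrt{\frac{\varepsilon\,\mathrm{Opt}}{n}}$. $\textsc{ComputeWinner}(Q)$: for each $q_j\in Q$ let $\rho_j$ be the distance from $q_j$ to its $\lceil\frac{7}{10}|Q|\rceil$-th closest point of $Q$, and $D_j=\sum_{q\in Q,\ \|q-q_j\|\le\rho_j}\|q-q_j\|$; output a $q_j$ minimizing $D_j$. $\textsc{MinSumSelect}(P,i)$: if $i=0$ or $|P|=1$, let $W=P$; otherwise split $P$ arbitrarily into $\sqrt{|P|}$ clusters $P_1,\dots,P_{\sqrt{|P|}}$ of size $\sqrt{|P|}$ each and let $W=\{\textsc{MinSumSelect}(P_j,i-1)\}_j$; output $\textsc{ComputeWinner}(W)$. Integrality issues are ignored (all square roots arising in the recursion are treated as integers). *)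

From HB Require Import structures.
From mathcomp Require Import all_boot all_order all_algebra.
From mathcomp Require Import reals.
Set Implicit Arguments. Unset Strict Implicit. Unset Printing Implicit Defensive.
Import Order.TTheory GRing.Theory Num.Theory.
Local Open Scope ring_scope.

Section Defs.
Variables (R : realType) (d : nat).
Local Notation pt := 'rV[R]_d.

Definition edist (x y : pt) : R :=
  Num.sqrt (\sum_(k < d) (x 0 k - y 0 k) ^+ 2).

Definition mean (A : seq pt) : pt := (size A)%:R^-1 *: \sum_(p <- A) p.

Definition Opt (A : seq pt) : R := \sum_(p <- A) edist p (mean A) ^+ 2.

Definition good (A : seq pt) (eps gamma : R) (x : pt) : bool :=
  edist x (mean A) <= gamma * Num.sqrt (eps * Opt A / (size A)%:R).

(* ceil(7/10 * m) *)
Definition k710 (m : nat) : nat := ((7 * m + 9) %/ 10)%N.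

(* rho: distance from q to its ceil(7|Q|/10)-th closest point of Q
   (Q as a multiset, q itself included at distance 0) *)
Definition rho (Q : seq pt) (q : pt) : R :=
  nth 0 (sort (fun a b : R => a <= b) [seq edist p q | p <- Q]) (k710 (size Q)).-1.

Definition Dsum (Q : seq pt) (q : pt) : R :=
  \sum_(p <- Q | edist p q <= rho Q q) edist p q.

(* x is a possible output of ComputeWinner(Q) (ties broken arbitrarily) *)
Definition winner (Q : seq pt) (x : pt) : Prop :=
  x \in Q /\ forall y, y \in Q -> Dsum Q x <= Dsum Q y.

(* mss P i x : x is a possible output of MinSumSelect(P, i), for some
   arbitrary split of P into sqrt|P| clusters of size sqrt|P| each
   (integrality: only perfect-square sizes can be split) and arbitrary
   tie-breaking in ComputeWinner. *)
Fixpoint mss (P : seq pt) (i : nat) (x : pt) : Prop :=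
  match i with
  | 0 => winner P x
  | i'.+1 =>
      if size P == 1%N then winner P x
      else exists (m : nat) (cl : seq (seq pt)) (W : seq pt),
        (m * m)%N = size P /\ size cl = m /\ all (fun c => size c == m) cl /\
        perm_eq (flatten cl) P /\ size W = m /\
        (forall j, (j < m)%N -> mss (nth [::] cl j) i' (nth 0 W j)) /\
        winner W x
  end.

End Defs.

(* A winner x of ComputeWinner(Q), where at least 7/10 of Q lies within r of
   a centre c, is compared with the points q near c.  The ball of radius
   rho(x) contains k = ceil(7|Q|/10) points, at least k - #far of them near c
   and hence at distance >= |x - c| - r from x; a near q has rho(q) <= 2r, so
   D_q is at most its distance sum to the near points plus 2r per far point.
   Averaging D_q over the near q and bounding the pairwise distance sum of g
   points in a ball of radius r by sqrt 2 g^2 r (Cauchy-Schwarz) forces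
   |x - c| <= 5r.  In the recursion, Markov's inequality shows that at most
   3/10 of the clusters contain more than a (3/10)^(i+1) fraction of bad
   points; the other clusters have 5^(i+1) gamma-good winners by induction,
   and one more ComputeWinner step multiplies the radius by 5. *)

From mathcomp Require Import all_boot all_order all_algebra.
From mathcomp Require Import reals.
From mathcomp Require Import ring lra zify.
Import Order.TTheory GRing.Theory Num.Theory.
Local Open Scope ring_scope.

Section OrderStatistics.
Context {disp : Order.disp_t} {T : orderType disp} (x0 : T).
Local Open Scope order_scope.

Lemma nth_sort_leE (s : seq T) k c : (k < size s)%N ->
  (nth x0 (sort <=%O s) k <= c) = (k < count (<= c) s)%N.
Proof.
set t := sort _ s => lt_ks.
have size_t : size t = size s by rewrite size_sort.
have mono i j : (i <= j < size s)%N -> nth x0 t i <= nth x0 t j.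
  move=> /andP[le_ij lt_js]; apply: (sorted_leq_nth le_trans lexx) (le_ij).
  - by apply: sort_sorted; exact: le_total.
  - by rewrite inE size_t; lia.
  - by rewrite inE size_t.
rewrite -(count_sort <=%O) -/t; apply/idP/idP => [le_tk_c | ].
- have: all (<= c) (take k.+1 t).
    apply/(all_nthP x0) => j; rewrite size_takel ?size_t // => lt_jk.
    by rewrite nth_take //; apply: le_trans le_tk_c; apply: mono; lia.
  rewrite all_count size_takel ?size_t // => /eqP count_take.
  by rewrite -(cat_take_drop k.+1 t) count_cat count_take ltn_addr.
- apply: contraTT; rewrite -ltNge => lt_c_tk.
  have count_drop : count (<= c) (drop k t) = 0%N.
    apply/eqP; rewrite -leqn0 leqNgt -has_count; apply/hasPn => y /(nthP x0)[j].
    rewrite size_drop size_t => lt_j <-.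
    by rewrite nth_drop -ltNge (lt_le_trans lt_c_tk) // mono //; lia.
  rewrite -(cat_take_drop k t) count_cat count_drop addn0 -leqNgt.
  by rewrite (leq_trans (count_size _ _)) // size_takel // size_t ltnW.
Qed.
End OrderStatistics.

Lemma lagrange_identity {R : comPzRingType} {I : Type} (s : seq I) (a b : I -> R) :
  \sum_(i <- s) \sum_(j <- s) (a i * b j - a j * b i) ^+ 2
  = 2 * (\sum_(i <- s) a i ^+ 2) * (\sum_(i <- s) b i ^+ 2)
    - 2 * (\sum_(i <- s) a i * b i) ^+ 2.
Proof.
have expand i j : (a i * b j - a j * b i) ^+ 2 =
    a i ^+ 2 * b j ^+ 2 + b i ^+ 2 * a j ^+ 2 - 2 * (a i * b i) * (a j * b j).
  by ring.
under eq_bigr do under eq_bigr do rewrite expand.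
under eq_bigr do rewrite sumrB big_split -!mulr_sumr /=.
rewrite sumrB big_split -!mulr_suml -mulr_sumr /=; ring.
Qed.

Lemma sumr1_size {R : pzSemiRingType} {I : Type} (s : seq I) :
  \sum_(i <- s) (1 : R) = (size s)%:R.
Proof. by rewrite -sum1_size natr_sum. Qed.

Section CauchySchwarz.
Context {R : realDomainType} {I : Type} (s : seq I).

Lemma cauchy_schwarz_seq (a b : I -> R) :
  (\sum_(i <- s) a i * b i) ^+ 2
  <= (\sum_(i <- s) a i ^+ 2) * (\sum_(i <- s) b i ^+ 2).
Proof.
have : 0 <= \sum_(i <- s) \sum_(j <- s) (a i * b j - a j * b i) ^+ 2.
  by do 2 (apply: sumr_ge0 => ? _); exact: sqr_ge0.
by rewrite lagrange_identity subr_ge0 -!mulrA ler_pM2l.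
Qed.

Lemma sqr_sum_le (f : I -> R) :
  (\sum_(i <- s) f i) ^+ 2 <= (size s)%:R * \sum_(i <- s) f i ^+ 2.
Proof.
have := cauchy_schwarz_seq f (fun=> 1).
under eq_bigr do rewrite mulr1.
under [\sum_(i <- s) 1 ^+ 2]eq_bigr do rewrite expr1n.
by rewrite sumr1_size mulrC.
Qed.

Lemma sum_sqr_sub_le (f : I -> R) :
  \sum_(i <- s) \sum_(j <- s) (f i - f j) ^+ 2
  <= 2 * (size s)%:R * \sum_(i <- s) f i ^+ 2.
Proof.
have := lagrange_identity s f (fun=> 1).
under eq_bigr do under eq_bigr do rewrite !mulr1.
under [\sum_(i <- s) 1 ^+ 2]eq_bigr do rewrite expr1n.
rewrite sumr1_size => ->.
have := sqr_ge0 (\sum_(i <- s) f i * 1); nra.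
Qed.
End CauchySchwarz.

Lemma ler_of_sqr {R : realDomainType} (u v : R) : 0 <= v -> u ^+ 2 <= v ^+ 2 -> u <= v.
Proof. by move=> v_ge0 le_uv2; nra. Qed.

Section EuclideanDistance.
Context {R : realType} {d : nat}.
Local Notation pt := 'rV[R]_d.
Implicit Types (x y z c : pt) (G : seq pt).

Lemma edist_ge0 x y : 0 <= edist x y.
Proof. exact: sqrtr_ge0. Qed.

Lemma sqr_edist x y : edist x y ^+ 2 = \sum_(k < d) (x 0 k - y 0 k) ^+ 2.
Proof. by rewrite sqr_sqrtr // sumr_ge0 // => k _; exact: sqr_ge0. Qed.

Lemma edistC x y : edist x y = edist y x.
Proof. by rewrite /edist; under eq_bigr do rewrite -sqrrN opprB. Qed.

Lemma edist_triangle x y z : edist x y <= edist x z + edist z y.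
Proof.
have cs : \sum_(k < d) (x 0 k - z 0 k) * (z 0 k - y 0 k) <= edist x z * edist z y.
  apply: ler_of_sqr; first by rewrite mulr_ge0 ?edist_ge0.
  by rewrite exprMn !sqr_edist; exact: cauchy_schwarz_seq.
have expand : edist x y ^+ 2 = edist x z ^+ 2
    + 2 * \sum_(k < d) (x 0 k - z 0 k) * (z 0 k - y 0 k) + edist z y ^+ 2.
  by rewrite !sqr_edist mulr_sumr -!big_split /=; apply: eq_bigr => k _; ring.
apply: ler_of_sqr; first by rewrite addr_ge0 ?edist_ge0.
by rewrite expand sqrrD; lra.
Qed.

Lemma sum_sqr_edist_pairs_le G c :
  \sum_(q <- G) \sum_(p <- G) edist p q ^+ 2
  <= 2 * (size G)%:R * \sum_(p <- G) edist p c ^+ 2.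
Proof.
under eq_bigr do under eq_bigr do rewrite sqr_edist.
under [X in _ <= _ * X]eq_bigr do rewrite sqr_edist.
under eq_bigr do rewrite exchange_big /=.
rewrite exchange_big [X in _ <= _ * X]exchange_big mulr_sumr /=.
apply: ler_sum => k _.
have shift (p q : pt) : p 0 k - q 0 k = (p 0 k - c 0 k) - (q 0 k - c 0 k) by ring.
under eq_bigr do under eq_bigr do rewrite shift.
rewrite exchange_big /=.
exact: (sum_sqr_sub_le G (fun p => p 0 k - c 0 k)).
Qed.

Lemma sqr_sum_edist_pairs_le G c r : (forall p, p \in G -> edist p c <= r) ->
  (\sum_(q <- G) \sum_(p <- G) edist p q) ^+ 2 <= 2 * (size G)%:R ^+ 4 * r ^+ 2.
Proof.
move=> near_c.
have sum_near : \sum_(p <- G) edist p c ^+ 2 <= (size G)%:R * r ^+ 2.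
  rewrite -sumr1_size mulr_suml !big_seq; apply: ler_sum => p pG.
  have r_ge0 : 0 <= r := le_trans (edist_ge0 p c) (near_c p pG).
  by rewrite mul1r ler_sqr ?nnegrE ?edist_ge0 ?near_c.
have pairs := sum_sqr_edist_pairs_le G c.
set g := (size G)%:R in sum_near pairs *.
have g_ge0 : 0 <= g by exact: ler0n.
have inner : \sum_(q <- G) (\sum_(p <- G) edist p q) ^+ 2
    <= g * \sum_(q <- G) \sum_(p <- G) edist p q ^+ 2.
  by rewrite mulr_sumr; apply: ler_sum => q _; exact: sqr_sum_le.
apply: le_trans (sqr_sum_le _ _) _; rewrite -/g.
have -> : 2 * g ^+ 4 * r ^+ 2 = g * (g * (2 * g * (g * r ^+ 2))) by ring.
have two_g_ge0 : 0 <= 2 * g by rewrite mulr_ge0.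
rewrite ler_wpM2l //; apply: le_trans inner _; rewrite ler_wpM2l //.
exact: le_trans pairs (ler_wpM2l two_g_ge0 sum_near).
Qed.

End EuclideanDistance.

Lemma k710_le m : (k710 m <= m)%N.
Proof. rewrite /k710; lia. Qed.

Lemma k710_gt0 m : (0 < k710 m)%N = (0 < m)%N.
Proof. by apply/idP/idP; rewrite /k710; lia. Qed.

Lemma leq_k710 m n : (k710 m <= n)%N = (7 * m <= 10 * n)%N.
Proof. by apply/idP/idP; rewrite /k710; lia. Qed.

Section Rho.
Context {R : realType} {d : nat} (Q : seq 'rV[R]_d).
Hypothesis Q_gt0 : (0 < size Q)%N.

Let k_gt0 : (0 < k710 (size Q))%N. Proof. by rewrite k710_gt0. Qed.

Lemma k710_le_count_rho q :
  (k710 (size Q) <= count (fun p => (edist p q <= rho Q q)%R) Q)%N.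
Proof.
have := nth_sort_leE (0 : R) [seq edist p q | p <- Q] (k710 (size Q)).-1 (rho Q q).
rewrite size_map count_map (prednK k_gt0) k710_le lexx.
by move=> /(_ isT)/esym.
Qed.

Lemma rho_le q a : (k710 (size Q) <= count (fun p => (edist p q <= a)%R) Q)%N ->
  rho Q q <= a.
Proof.
move=> le_k_count; rewrite /rho nth_sort_leE; last first.
  by rewrite size_map (prednK k_gt0) k710_le.
by rewrite (prednK k_gt0) count_map.
Qed.
End Rho.

Lemma winner_arith {R : realFieldType} {m g k n e r S D : R} :
  0 <= r -> 0 < m -> 7 * m <= 10 * k -> k <= g -> g <= m -> k <= n + (m - g) ->
  S ^+ 2 <= 2 * g ^+ 4 * r ^+ 2 -> e * n <= D ->
  g * D <= S + g * ((m - g) * (2 * r)) -> e <= 4 * r.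
Proof.
move=> r_ge0 m_gt0 le_mk le_kg le_gm le_k_n S_sqr le_en avg.
set w := 4 * k - 6 * (m - g).
have g_gt0 : 0 < g by lra.
have n_gt0 : 0 < n by lra.
have w_ge0 : 0 <= w by rewrite /w; lra.
(* S <= sqrt 2 g^2 r <= r g w uses sqrt 2 <= 10/7; the trivial bound
   S <= 2 g^2 r would only give e <= 5r. *)
have S_le : S <= r * g * w.
  apply: ler_of_sqr; first by rewrite !mulr_ge0 // ltW.
  have : 2 * g ^+ 2 <= w ^+ 2.
    have : 10 * g <= 7 * w by rewrite /w; lra.
    nra.
  move=> g2_le; apply: le_trans S_sqr _.
  have := ler_wpM2l (mulr_ge0 (sqr_ge0 r) (sqr_ge0 g)) g2_le.
  by rewrite !exprMn; lra.
have : g * n * e <= g * n * (4 * r).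
  rewrite -mulrA [n * e]mulrC (le_trans (ler_wpM2l (ltW g_gt0) le_en)) //.
  apply: le_trans avg _.
  have : r * g * (k - (m - g)) <= r * g * n.
    by apply: ler_wpM2l; [rewrite mulr_ge0 // ltW | lra].
  rewrite /w in S_le; lra.
by rewrite ler_pM2l ?mulr_gt0.
Qed.

Lemma sumr_const_count {V : nmodType} {I : Type} (s : seq I) (P : pred I) (x : V) :
  \sum_(i <- s | P i) x = x *+ count P s.
Proof. by rewrite big_const_seq iter_addr_0. Qed.

Lemma count_le_predI_predC {T : Type} (a b : pred T) (s : seq T) :
  (count a s <= count (predI a b) s + count (predC b) s)%N.
Proof. by elim: s => //= x s IH; case: (a x) (b x) => [] []; lia. Qed.

Section ComputeWinner.
Context {R : realType} {d : nat} {Q : seq 'rV[R]_d} {c : 'rV[R]_d} {r : R}.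
Local Notation near := (fun q => (edist q c <= r)%R).
Local Notation in_ball x := (fun p => (edist p x <= rho Q x)%R).
Local Notation m := (size Q).
Local Notation g := (count near Q).
Hypotheses (r_ge0 : 0 <= r) (Q_gt0 : (0 < m)%N).
Hypothesis mostly_near : 7%:R / 10%:R * m%:R <= g%:R :> R.

Lemma k710_le_count_near : (k710 m <= g)%N.
Proof. by move: mostly_near; rewrite leq_k710 -(@ler_nat R) !natrM; lra. Qed.

Lemma rho_near_le q : near q -> rho Q q <= 2 * r.
Proof.
move=> /= near_q; apply: rho_le => //; apply: leq_trans k710_le_count_near _.
apply: sub_count => p /= near_p.
by have := edist_triangle p q c; rewrite (edistC c q); lra.
Qed.

Lemma Dsum_near_le q : near q ->
  Dsum Q q <= \sum_(p <- Q | near p) edist p q + (2 * r) *+ (m - g).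
Proof.
move=> near_q; rewrite -(count_predC near Q) addKn -sumr_const_count.
rewrite /Dsum big_mkcond [X in _ <= X + _]big_mkcond [X in _ <= _ + X]big_mkcond.
rewrite -big_split /=; apply: ler_sum => p _.
case: ifP => [in_ball_p | _]; case: ifP => near_p /=; rewrite ?addr0 ?add0r //.
- exact: le_trans in_ball_p (rho_near_le _ near_q).
- exact: edist_ge0.
- by rewrite mulr_ge0.
Qed.

Lemma Dsum_far_ge x : (edist x c - r) *+ count (predI (in_ball x) near) Q <= Dsum Q x.
Proof.
rewrite -sumr_const_count /Dsum.
apply: (@le_trans _ _ (\sum_(p <- Q | predI (in_ball x) near p) edist p x)).
  apply: ler_sum => p /andP[_ near_p].
  by have := edist_triangle x c p; rewrite (edistC x p); lra.
rewrite [X in _ <= X]big_mkcond [X in X <= _]big_mkcond /=.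
apply: ler_sum => p _; case: (edist p x <= rho Q x) => //=.
by case: ifP => // _; exact: edist_ge0.
Qed.

Lemma count_in_ball_near x :
  (k710 m <= count (predI (in_ball x) near) Q + (m - g))%N.
Proof.
apply: leq_trans (k710_le_count_rho _ Q_gt0 x) _.
by rewrite -(count_predC near Q) addKn count_le_predI_predC.
Qed.

Lemma winner_near x : winner Q x -> edist x c <= 5 * r.
Proof.
move=> [_ x_min].
set n := count (predI (in_ball x) near) Q.
set S := \sum_(q <- Q | near q) \sum_(p <- Q | near p) edist p q.
have avg : Dsum Q x *+ g <= S + (2 * r) *+ (m - g) *+ g.
  rewrite -!sumr_const_count -big_split /=.
  rewrite [X in X <= _]big_seq_cond [X in _ <= X]big_seq_cond.
  apply: ler_sum => q /andP[qQ near_q].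
  exact: le_trans (x_min q qQ) (Dsum_near_le _ near_q).
have S_sqr : S ^+ 2 <= 2 * g%:R ^+ 4 * r ^+ 2.
  have -> : S = \sum_(q <- filter near Q) \sum_(p <- filter near Q) edist p q.
    by rewrite big_filter; apply: eq_bigr => q _; rewrite big_filter.
  rewrite -size_filter.
  apply: (sqr_sum_edist_pairs_le _ c) => p.
  by rewrite mem_filter => /andP[].
have m_gt0 : 0 < m%:R :> R by rewrite ltr0n.
have le_mk : 7 * m%:R <= 10 * (k710 m)%:R :> R.
  by rewrite -!natrM ler_nat -leq_k710.
have le_kg : (k710 m)%:R <= g%:R :> R by rewrite ler_nat k710_le_count_near.
have le_gm : g%:R <= m%:R :> R by rewrite ler_nat count_size.
have le_kn : (k710 m)%:R <= n%:R + (m%:R - g%:R) :> R.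
  by rewrite -natrB ?count_size // -natrD ler_nat count_in_ball_near.
have far := Dsum_far_ge x; rewrite -mulr_natr in far.
rewrite -(mulr_natl (Dsum Q x)) -(mulr_natl (_ *+ (m - g))) -(mulr_natl (2 * r)) in avg.
rewrite natrB ?count_size // in avg.
have := winner_arith r_ge0 m_gt0 le_mk le_kg le_gm le_kn S_sqr far avg.
lra.
Qed.
End ComputeWinner.

Lemma leq_count_nth {T U : Type} (x0 : T) (y0 : U) (a : pred T) (b : pred U)
    (s : seq T) (t : seq U) : size s = size t ->
  (forall j, (j < size s)%N -> a (nth x0 s j) -> b (nth y0 t j)) ->
  (count a s <= count b t)%N.
Proof.
elim: s t => [|x s IH] [|y t] //= [size_st] ab.
apply: leq_add; last by apply: IH => // j lt_js; exact: (ab j.+1).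
by have := ab 0%N isT; case: (a x); case: (b y) => // /(_ isT).
Qed.

Section Clusters.
Context {R : realFieldType} {T : Type} (a : pred T) (m : nat) (s : R).
Local Notation dense := (fun C : seq T => (1 - s) * (size C)%:R <= (count a C)%:R).

Lemma markov_clusters (cl : seq (seq T)) : all (fun C => size C == m) cl ->
  s * m%:R * ((size cl)%:R - (count dense cl)%:R)
  <= (m * size cl)%:R - (count a (flatten cl))%:R.
Proof.
elim: cl => [_ | C cl IH] /=; first by rewrite muln0 !subr0 mulr0.
case/andP=> /eqP size_C /IH {}IH.
have step : s * m%:R * (1 - (dense C : nat)%:R) <= m%:R - (count a C)%:R.
  have := count_size a C; rewrite size_C -(ler_nat R) => le_am /=.
  case: (leP ((1 - s) * m%:R) (count a C)%:R) => /= [_ | sparse].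
  - by rewrite subrr mulr0 subr_ge0.
  - by rewrite subr0 mulr1; lra.
rewrite count_cat mulnS !natrD -addn1 natrD; lra.
Qed.

Lemma count_dense_clusters (t : R) (cl : seq (seq T)) :
  0 < s -> (0 < m)%N -> all (fun C => size C == m) cl ->
  (1 - s * t) * (m * size cl)%:R <= (count a (flatten cl))%:R ->
  (1 - t) * (size cl)%:R <= (count dense cl)%:R.
Proof.
move=> s_gt0 m_gt0 sizes mostly_a; have := markov_clusters cl sizes.
have sm_gt0 : 0 < s * m%:R by rewrite mulr_gt0 ?ltr0n.
rewrite natrM in mostly_a * => markov.
have : s * m%:R * ((size cl)%:R - (count dense cl)%:R)
    <= s * m%:R * (t * (size cl)%:R) by lra.
by rewrite ler_pM2l //; lra.
Qed.
End Clusters.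

Lemma size_winner_gt0 {R : realType} {d : nat} {Q : seq 'rV[R]_d} {x : 'rV[R]_d} :
  winner Q x -> (0 < size Q)%N.
Proof. by case; case: Q. Qed.

Lemma mss_near {R : realType} {d : nat} (c : 'rV[R]_d) (r : R) (i : nat)
    (P : seq 'rV[R]_d) (x : 'rV[R]_d) : 0 <= r ->
  (1 - (3%:R / 10%:R : R) ^+ i.+1) * (size P)%:R
    <= (count (fun q => edist q c <= r) P)%:R ->
  mss P i x -> edist x c <= 5%:R ^+ i.+1 * r.
Proof.
have tenth3_gt0 : 0 < 3%:R / 10%:R :> R by rewrite divr_gt0 ?ltr0n.
have weaken n (Q : seq 'rV[R]_d) (near : pred 'rV[R]_d) :
    (1 - (3%:R / 10%:R) ^+ n.+1) * (size Q)%:R <= (count near Q)%:R :> R ->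
    7%:R / 10%:R * (size Q)%:R <= (count near Q)%:R :> R.
  apply: le_trans; apply: ler_wpM2r => //.
  by have := @ler_iXnr _ _ n.+1 isT (ltW tenth3_gt0); lra.
elim: i r P x => [|i IH] r P x r_ge0 mostly_near /=.
  move=> win; rewrite expr1.
  exact: winner_near r_ge0 (size_winner_gt0 win) (weaken _ _ _ mostly_near) x win.
case: ifP => [_ win | _ [m [cl [W [sizeP [size_cl [sizes [perm_P [size_W [mss_cl win]]]]]]]]]].
  apply: le_trans (winner_near r_ge0 (size_winner_gt0 win) (weaken _ _ _ mostly_near) x win) _.
  by apply: ler_wpM2r => //; apply: ler_eXnr; rewrite ?ler1n.
rewrite exprS -mulrA.
have r'_ge0 : 0 <= 5%:R ^+ i.+1 * r by rewrite mulr_ge0 ?exprn_ge0.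
have m_gt0 : (0 < m)%N by rewrite -size_W (size_winner_gt0 win).
apply: winner_near r'_ge0 (size_winner_gt0 win) _ x win.
have := count_dense_clusters (fun q => edist q c <= r) m ((3%:R / 10%:R) ^+ i.+1)
  (3%:R / 10%:R) cl (exprn_gt0 _ tenth3_gt0) m_gt0 sizes.
rewrite -exprSr size_cl sizeP (permP perm_P) => /(_ mostly_near) dense_cl.
rewrite size_W; apply: le_trans (_ : _ <= (count _ cl)%:R) _.
  by move: dense_cl; lra.
rewrite ler_nat; apply: (leq_count_nth [::] 0) => [|j lt_j dense_j]; first by rewrite size_W.
by rewrite size_cl in lt_j; exact: IH r_ge0 dense_j (mss_cl j lt_j).
Qed.

Theorem lemma4p3 (R : realType) (d : nat) (A : seq 'rV[R]_d) (eps gamma : R)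
  (i : nat) (P : seq 'rV[R]_d) :
  (0 < size A)%N -> 0 < eps -> 0 < gamma ->
  (1 - (3%:R / 10%:R : R) ^+ i.+1) * (size P)%:R
    <= (count (good A eps gamma) P)%:R ->
  forall x, mss P i x -> good A eps (5%:R ^+ i.+1 * gamma) x.
Proof.
(* Only gamma >= 0 matters: the radius sqrt (eps Opt / n) is nonnegative anyway. *)
move=> _ _ gamma_gt0 mostly_good x mss_x.
rewrite /good -mulrA; apply: mss_near mss_x => //.
by rewrite mulr_ge0 ?sqrtr_ge0 ?ltW.
Qed.
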